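(* Let $K=2$ and suppose that for every horizon $T$ (a multiple of $100$) a valid pair $(\eta,\gamma)=(\eta_T,\gamma_T)$ in the non-trivial regime is chosen. Then there exists $T_0$ such that for all $T\ge T_0$ with $\Pr(\mathcal E_2)>0$, WSU-UX run on the two-phase loss sequence satisfies $$\Pr\Bigl(\pi_{T+1,1}\le\tfrac34\,\Bigm|\,\mathcal E_2\Bigr)\le\frac{75}{4}\,e^{-c\eta T},\qquad c=\tfrac{79}{400}.$$
   Context: WSU-UX. Fix integers $K\ge 2$ and $T\ge 1$ and hyperparameters $\eta,\gamma$. The pair $(\eta,\gamma)$ is called valid if $\eta,\gamma\in(0,1/2)$ and $\eta K/\gamma\le 1/2$. Given a fixed loss sequence $\ell_t\in[0,1]^K$, WSU-UX sets $\pi_{1,i}=1/K$ and in each round $t$: forms $\tilde\pi_{t,i}=(1-\gamma)\pi_{t,i}+\gamma/K$; draws $I_t$ with $\Pr(I_t=i\mid\mathcal F_{t-1})=\tilde\pi_{t,i}$; sets $\hat\ell_{t,i}=\ell_{t,i}\mathbf 1[I_t=i]/\tilde\pi_{t,i}$; and updates $\pi_{t+1,i}=\pi_{t,i}\bigl(1-\eta(\hat\ell_{t,i}-\sum_{j}\pi_{t,j}\hat\ell_{t,j})\bigr)$; $\mathcal F_t$ is the history generated by $I_1,\dots,I_t$. Non-trivial regime: $\eta\ge T^{-2/3}$ and $\gamma\le T^{-1/3}$. Two-phase loss sequence ($K=2$, $T$ a multiple of $100$): with $T_1=\frac{T}{100}$, $\ell_{t,1}=1,\ell_{t,2}=0$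 for $1\le t\le T_1$ and $\ell_{t,1}=0,\ell_{t,2}=1$ for $T_1<t\le T$. Further $T_2=\frac{2}{10}T$, and $\mathcal E_2$ denotes the event $\{\pi_{T_1+T_2+1,1}\ge\frac14\}$. *)

From HB Require Import structures.
From mathcomp Require Import all_boot all_order all_algebra.
From mathcomp Require Import reals sequences exp.
Set Implicit Arguments. Unset Strict Implicit. Unset Printing Implicit Defensive.
Import Order.TTheory GRing.Theory Num.Theory.
Local Open Scope ring_scope.

Section WSUUX.
Variables (R : realType) (K : nat).
Variables (eta gamma : R) (ell : nat -> 'I_K -> R).

Definition tilde_pi (p : 'I_K -> R) (i : 'I_K) : R :=
  (1 - gamma) * p i + gamma / K%:R.

Definition loss_hat (t : nat) (p : 'I_K -> R) (It i : 'I_K) : R :=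
  ell t i * (It == i)%:R / tilde_pi p i.

Definition wsu_step (t : nat) (p : 'I_K -> R) (It : 'I_K) : 'I_K -> R :=
  fun i => p i * (1 - eta * (loss_hat t p It i
                             - \sum_(j < K) p j * loss_hat t p It j)).

Definition pi_init : 'I_K -> R := fun _ => 1 / K%:R.

(* pi_run t p s: starting from pi_t = p and drawing the arms s in rounds
   t, t+1, ..., returns pi_{t + size s}. *)
Fixpoint pi_run (t : nat) (p : 'I_K -> R) (s : seq 'I_K) : 'I_K -> R :=
  match s with
  | [::] => p
  | It :: s' => pi_run t.+1 (wsu_step t p It) s'
  end.

(* pi_{n+1} along the history s = (I_1, I_2, ...) : uses I_1..I_n *)
Definition pi_at (s : seq 'I_K) (n : nat) : 'I_K -> R :=
  pi_run 1 pi_init (take n s).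

Fixpoint path_prob (t : nat) (p : 'I_K -> R) (s : seq 'I_K) : R :=
  match s with
  | [::] => 1
  | It :: s' => tilde_pi p It * path_prob t.+1 (wsu_step t p It) s'
  end.

Definition wsu_prob (T : nat) (A : pred (T.-tuple 'I_K)) : R :=
  \sum_(s : T.-tuple 'I_K | A s) path_prob 1 pi_init s.

End WSUUX.

Definition valid_pair (R : realType) (K : nat) (eta gamma : R) : Prop :=
  [/\ 0 < eta, eta < 1/2, 0 < gamma, gamma < 1/2 & eta * K%:R / gamma <= 1/2].

Definition nontrivial_regime (R : realType) (T : nat) (eta gamma : R) : Prop :=
  T%:R `^ (- (2/3)) <= eta /\ gamma <= T%:R `^ (- (1/3)).

(* Two-phase loss sequence, K = 2, arm 1 = ord0, arm 2 = ord_max *)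
Definition two_phase_loss (R : realType) (T : nat) (t : nat) (i : 'I_2) : R :=
  if (t <= T %/ 100)%N then (i == ord0)%:R else (i != ord0)%:R.

Definition T1 (T : nat) : nat := T %/ 100.
Definition T2 (T : nat) : nat := (2 * T) %/ 10.

From HB Require Import structures.
From mathcomp Require Import all_boot all_order all_algebra.
From mathcomp Require Import reals sequences exp.
From mathcomp Require Import ring lra zify.
Import Order.TTheory GRing.Theory Num.Theory.
Local Open Scope ring_scope.
Set Implicit Arguments. Unset Strict Implicit.

(* From round [T1 + 1] on, arm 1 has loss 0 and arm 2 has loss 1, so [pi_{t,1}]
   never decreases, and a direct computation (using [eta <= gamma / 4], i.e.
   [eta K / gamma <= 1/2] for [K = 2]) shows that [1 / pi_{t,1}^2], cut off to 0
   once [pi_{t,1} > 3/4], is a supermartingale contracting by [1 - eta / 4] per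
   round.  Conditionally on a history of the first [T1 + T2] rounds ending with
   [pi_1 >= 1/4], Markov's inequality over the remaining [79 T / 100] rounds
   bounds the probability of [pi_{T+1,1} <= 3/4] by
   [9/16 * 16 * (1 - eta/4)^(79 T / 100) <= 9 exp (- 79 eta T / 400)].
   This holds for every horizon, so [T0 = 0]. *)

Lemma sum_tuple_cons (R : nmodType) (I : finType) n (F : n.+1.-tuple I -> R) :
  \sum_(s : n.+1.-tuple I) F s = \sum_(i : I) \sum_(s : n.-tuple I) F [tuple of i :: s].
Proof.
rewrite pair_big /= (reindex (fun p : I * n.-tuple I => [tuple of p.1 :: p.2])) //=.
exists (fun s : n.+1.-tuple I => (thead s, [tuple of behead s])) => [[i s] _|s _] /=.
  by congr (_, _); apply: val_inj.
by apply: val_inj; rewrite /= [in RHS](tuple_eta s).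
Qed.

Lemma sum_tuple0 (R : nmodType) (I : finType) (F : 0.-tuple I -> R) :
  \sum_(s : 0.-tuple I) F s = F [tuple].
Proof. by rewrite (big_pred1 [tuple]) // => s; apply/esym/eqP/val_inj; case: s => -[]. Qed.

Lemma pi_run_cat (R : realType) (K : nat) (eta gamma : R) ell t (p : 'I_K -> R) u v :
  pi_run eta gamma ell t p (u ++ v) =
  pi_run eta gamma ell (t + size u) (pi_run eta gamma ell t p u) v.
Proof. by elim: u t p => [|i u IH] t p /=; rewrite ?addn0 // IH addSnnS. Qed.

Section WSUExpectation.
Variables (R : realType) (K : nat) (eta gamma : R) (ell : nat -> 'I_K -> R).

Definition wsu_admissible : Prop :=
  [/\ (0 < K)%N, 0 <= eta, 0 < gamma <= 1, eta * K%:R / gamma <= 1/2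
     & forall t i, 0 <= ell t i <= 1].

Hypothesis admissible : wsu_admissible.

Let K_gt0 : (0 < K)%N. Proof. by case: admissible. Qed.
Let eta_ge0 : 0 <= eta. Proof. by case: admissible. Qed.
Let gamma_gt0 : 0 < gamma. Proof. by case: admissible => _ _ /andP[]. Qed.
Let gamma_le1 : gamma <= 1. Proof. by case: admissible => _ _ /andP[]. Qed.
Let eta_gamma : eta * K%:R / gamma <= 1/2. Proof. by case: admissible. Qed.
Let ell_ge0 t i : 0 <= ell t i. Proof. by case: admissible => _ _ _ _ /(_ t i)/andP[]. Qed.
Let ell_le1 t i : ell t i <= 1. Proof. by case: admissible => _ _ _ _ /(_ t i)/andP[]. Qed.

Local Notation w := (@tilde_pi R K gamma).
Local Notation lhat := (loss_hat gamma ell).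
Local Notation step := (wsu_step eta gamma ell).
Local Notation run := (pi_run eta gamma ell).

Definition simplex (p : 'I_K -> R) := (forall i, 0 <= p i) /\ \sum_i p i = 1.

Lemma tilde_pi_ge p i : 0 <= p i -> gamma / K%:R <= w p i.
Proof.
move=> p_ge0; rewrite /tilde_pi -[X in X <= _]add0r lerD2r.
by apply: mulr_ge0; rewrite ?subr_ge0.
Qed.

Lemma tilde_pi_gt0 p i : 0 <= p i -> 0 < w p i.
Proof.
move=> /tilde_pi_ge; apply: lt_le_trans.
by apply: divr_gt0; rewrite ?ltr0n.
Qed.

Lemma sum_tilde_pi p : simplex p -> \sum_i w p i = 1.
Proof.
case=> _ sum_p; rewrite big_split /= -mulr_sumr sum_p sumr_const card_ord.
by rewrite -mulr_natr; field; rewrite pnatr_eq0 -lt0n.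
Qed.

Lemma loss_hat_ge0 t p It i : 0 <= p i -> 0 <= lhat t p It i.
Proof.
move=> p_ge0; rewrite /loss_hat; apply: divr_ge0; last exact/ltW/tilde_pi_gt0.
by apply: mulr_ge0; rewrite ?ler0n.
Qed.

Lemma eta_loss_hat_le t p It i : 0 <= p i -> eta * lhat t p It i <= 1/2.
Proof.
move=> p_ge0; apply: le_trans eta_gamma.
have w_ge := tilde_pi_ge p_ge0; have w_gt0 := tilde_pi_gt0 p_ge0.
have lhat_le : lhat t p It i <= K%:R / gamma.
  have num_le1 : ell t i * (It == i)%:R <= 1.
    by case: (It == i); rewrite ?mulr1 ?mulr0.
  apply: le_trans (_ : (w p i)^-1 <= _).
    by rewrite /loss_hat ler_pdivrMr // mulVf // gt_eqF.
  rewrite -(invrK (K%:R / gamma)) lef_pV2 ?posrE ?invr_gt0 ?divr_gt0 ?ltr0n //.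
  by rewrite invf_div.
by rewrite -mulrA ler_wpM2l.
Qed.

Lemma sum_loss_hat t p It :
  \sum_j p j * lhat t p It j = p It * lhat t p It It.
Proof.
rewrite (bigD1 It) //= big1 ?addr0 // => j /negbTE jNIt.
by rewrite /loss_hat eq_sym jNIt mulr0 mul0r mulr0.
Qed.

Lemma wsu_step_ge_half t p It i : simplex p -> p i / 2 <= step t p It i.
Proof.
case=> p_ge0 _; rewrite /wsu_step; apply: ler_wpM2l => //.
have S_ge0 : 0 <= \sum_j p j * lhat t p It j.
  by apply: sumr_ge0 => j _; apply: mulr_ge0 => //; apply: loss_hat_ge0.
have := eta_loss_hat_le t It (p_ge0 i); have := mulr_ge0 eta_ge0 S_ge0.
rewrite mulrBr; lra.
Qed.

Lemma simplex_step t p It : simplex p -> simplex (step t p It).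
Proof.
move=> p_simplex; split=> [i|].
  apply: le_trans (wsu_step_ge_half t It i p_simplex).
  by apply: divr_ge0 => //; case: p_simplex.
case: p_simplex => _ sum_p; rewrite /wsu_step.
set S := \sum_j p j * lhat t p It j.
transitivity (\sum_i (p i - eta * (p i * lhat t p It i) + eta * S * p i)).
  by apply: eq_bigr => i _; ring.
by rewrite big_split sumrB /= -!mulr_sumr sum_p -/S; ring.
Qed.

Lemma simplex_run t p s : simplex p -> simplex (run t p s).
Proof. by elim: s t p => [|It s IH] t p p_simplex //=; apply/IH/simplex_step. Qed.

Lemma pi_run_gt0 t p s i : simplex p -> 0 < p i -> 0 < run t p s i.
Proof.
elim: s t p => [|It s IH] t p p_simplex p_gt0 //=.
apply: IH; first exact: simplex_step.
by apply: lt_le_trans (wsu_step_ge_half t It i p_simplex); apply: divr_gt0.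
Qed.

Lemma simplex_pi_init : simplex (@pi_init R K).
Proof.
split=> [i|]; first by rewrite /pi_init divr_ge0.
by rewrite /pi_init sumr_const card_ord -mulr_natr; field; rewrite pnatr_eq0 -lt0n.
Qed.

Lemma path_prob_ge0 t p s : simplex p -> 0 <= path_prob eta gamma ell t p s.
Proof.
elim: s t p => [|It s IH] t p p_simplex //=.
apply: mulr_ge0; last exact/IH/simplex_step.
by apply/ltW/tilde_pi_gt0; case: p_simplex.
Qed.

Definition wsu_expect n t p (F : seq 'I_K -> R) : R :=
  \sum_(s : n.-tuple 'I_K) path_prob eta gamma ell t p s * F s.

Lemma wsu_expect0 t p F : wsu_expect 0 t p F = F [::].
Proof. by rewrite /wsu_expect sum_tuple0 mul1r. Qed.

Lemma wsu_expectS n t p F : wsu_expect n.+1 t p F =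
  \sum_i w p i * wsu_expect n t.+1 (step t p i) (fun s => F (i :: s)).
Proof.
rewrite /wsu_expect sum_tuple_cons; apply: eq_bigr => i _.
by rewrite mulr_sumr; apply: eq_bigr => s _; rewrite mulrA.
Qed.

Lemma eq_wsu_expect {n t p} {F G : seq 'I_K -> R} :
  (forall s : n.-tuple 'I_K, F s = G s) -> wsu_expect n t p F = wsu_expect n t p G.
Proof. by move=> FG; apply: eq_bigr => s _; rewrite FG. Qed.

Lemma ler_wsu_expect n t p (F G : seq 'I_K -> R) : simplex p ->
  (forall s : n.-tuple 'I_K, F s <= G s) -> wsu_expect n t p F <= wsu_expect n t p G.
Proof.
by move=> p_simplex FG; apply: ler_sum => s _; apply/ler_wpM2l/FG/path_prob_ge0.
Qed.

Lemma wsu_expectZ n t p c F :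
  wsu_expect n t p (fun s => c * F s) = c * wsu_expect n t p F.
Proof. by rewrite /wsu_expect mulr_sumr; apply: eq_bigr => s _; rewrite mulrCA. Qed.

Lemma wsu_expect_cst n t p c : simplex p -> wsu_expect n t p (fun _ => c) = c.
Proof.
elim: n t p => [|n IH] t p p_simplex; first by rewrite wsu_expect0.
rewrite wsu_expectS (eq_bigr (fun i => w p i * c)) => [|i _]; last first.
  by rewrite IH //; apply: simplex_step.
by rewrite -mulr_suml sum_tilde_pi // mul1r.
Qed.

Lemma wsu_expect_cat m n t p F : wsu_expect (m + n) t p F =
  wsu_expect m t p (fun u => wsu_expect n (t + m) (run t p u) (fun v => F (u ++ v))).
Proof.
elim: m t p F => [|m IH] t p F; first by rewrite wsu_expect0 addn0.
rewrite addSn !wsu_expectS; apply: eq_bigr => i _; rewrite IH.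
by congr (_ * _); apply: eq_wsu_expect => u; rewrite addSnnS.
Qed.

Lemma wsu_probE N (A : pred (N.-tuple 'I_K)) (f : pred (seq 'I_K)) :
  (forall s : N.-tuple 'I_K, A s = f s) ->
  wsu_prob eta gamma ell A = wsu_expect N 1 (@pi_init R K) (fun s => (f s)%:R).
Proof.
move=> Af; rewrite /wsu_prob /wsu_expect big_mkcond; apply: eq_bigr => s _.
by rewrite Af; case: (f s); rewrite ?mulr1 ?mulr0.
Qed.

Lemma wsu_expect_supermartingale (V : ('I_K -> R) -> R) rho t0 : 0 <= rho ->
  (forall t p, (t0 <= t)%N -> simplex p -> \sum_i w p i * V (step t p i) <= rho * V p) ->
  forall n t p, (t0 <= t)%N -> simplex p ->
  wsu_expect n t p (fun s => V (run t p s)) <= rho ^+ n * V p.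
Proof.
move=> rho_ge0 V_super; elim=> [|n IH] t p t0_le p_simplex.
  by rewrite wsu_expect0 expr0 mul1r.
rewrite wsu_expectS exprSr -mulrA.
apply: le_trans (ler_wpM2l (exprn_ge0 n rho_ge0) (V_super t p t0_le p_simplex)).
rewrite mulr_sumr; apply: ler_sum => i _; rewrite mulrCA.
apply/ler_wpM2l; first by apply/ltW/tilde_pi_gt0; case: p_simplex.
exact/IH/simplex_step/p_simplex/leqW.
Qed.

Lemma wsu_expect_condition_le m n t p (A B : pred (seq 'I_K)) c : simplex p ->
  (forall u : m.-tuple 'I_K, B u ->
     wsu_expect n (t + m) (run t p u) (fun v => (A (u ++ v))%:R) <= c) ->
  wsu_expect (m + n) t p (fun s => (A s && B (take m s))%:R)
  <= c * wsu_expect (m + n) t p (fun s => (B (take m s))%:R).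
Proof.
move=> p_simplex A_le; rewrite !wsu_expect_cat -wsu_expectZ.
apply: ler_wsu_expect => // u.
have take_u v : take m (u ++ v) = u by rewrite take_size_cat ?size_tuple.
have run_simplex := simplex_run t u p_simplex.
rewrite (eq_wsu_expect (G := fun v => (A (u ++ v) && B u)%:R)) => [|v]; last first.
  by rewrite take_u.
rewrite [X in _ <= _ * X](eq_wsu_expect (G := fun => (B u)%:R)) => [|v]; last first.
  by rewrite take_u.
rewrite wsu_expect_cst //; case Bu: (B u); rewrite ?mulr1 ?mulr0.
  rewrite (eq_wsu_expect (G := fun v => (A (u ++ v))%:R)) => [|v]; last first.
    by rewrite andbT.
  exact: A_le.
rewrite (eq_wsu_expect (G := fun => 0)) => [|v]; last by rewrite andbF.
by rewrite wsu_expect_cst.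
Qed.

End WSUExpectation.

Lemma ord2P (i : 'I_2) : i = ord0 \/ i = ord_max.
Proof. by case: i => -[|[|//]] i_lt; [left | right]; apply: val_inj. Qed.

Lemma sum_ord2 (R : nmodType) (F : 'I_2 -> R) : \sum_(i < 2) F i = F ord0 + F ord_max.
Proof. by rewrite big_ord_recl big_ord1; congr (_ + F _); apply: val_inj. Qed.

Lemma cube_le_mul_sqr (R : realDomainType) (w z e : R) :
  0 <= z -> e <= z -> 2 * z <= w -> w ^+ 3 <= (w - e) * (w + z) ^+ 2.
Proof.
move=> z_ge0 e_le z_le.
have d_ge0 : 0 <= w - 2 * z by lra.
have w_ge0 : 0 <= w by lra.
have e_ge0 : 0 <= z - e by lra.
have := mulr_ge0 e_ge0 (sqr_ge0 (w + z)).
have := mulr_ge0 (mulr_ge0 z_ge0 w_ge0) d_ge0.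
have := mulr_ge0 (mulr_ge0 z_ge0 z_ge0) d_ge0.
have := mulr_ge0 (mulr_ge0 z_ge0 z_ge0) z_ge0.
nra.
Qed.

Section PhaseTwo.
Variables (R : realType) (eta gamma : R) (ell : nat -> 'I_2 -> R) (t0 : nat).
Hypothesis admissible : wsu_admissible eta gamma ell.
Hypothesis ell_phase2 : forall t, (t0 <= t)%N -> ell t ord0 = 0 /\ ell t ord_max = 1.

Local Notation w := (@tilde_pi R 2 gamma).
Local Notation step := (wsu_step eta gamma ell).
Local Notation run := (pi_run eta gamma ell).

Lemma eta_le_gamma4 : eta <= gamma / 4.
Proof.
case: admissible => _ _ /andP[gamma_gt0 _]; rewrite ler_pdivrMr // => eta_gamma.
by rewrite ler_pdivlMr //; lra.
Qed.

Lemma phase2_step_ord0 t p : (t0 <= t)%N -> step t p ord0 ord0 = p ord0.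
Proof.
move=> /ell_phase2[ell0 _].
by rewrite /wsu_step sum_loss_hat /loss_hat eqxx ell0; ring.
Qed.

Lemma phase2_step_ord_max t p : (t0 <= t)%N -> simplex p ->
  step t p ord_max ord0 = p ord0 * (w p ord_max + eta * p ord_max) / w p ord_max.
Proof.
move=> /ell_phase2[_ ell1] [p_ge0 _].
have w0_gt0 := tilde_pi_gt0 admissible (p_ge0 ord0).
have w1_gt0 := tilde_pi_gt0 admissible (p_ge0 ord_max).
rewrite /wsu_step sum_loss_hat /loss_hat eqxx /= ell1.
by field; rewrite !gt_eqF.
Qed.

Lemma phase2_step_ge t p i : (t0 <= t)%N -> simplex p -> p ord0 <= step t p i ord0.
Proof.
move=> t_ge p_simplex; have [p_ge0 _] := p_simplex.
have [->|->] := ord2P i; first by rewrite phase2_step_ord0.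
have w1_gt0 := tilde_pi_gt0 admissible (p_ge0 ord_max).
rewrite phase2_step_ord_max // ler_pdivlMr // ler_wpM2l // lerDl.
by apply: mulr_ge0 => //; case: admissible.
Qed.

Definition phase2_potential (p : 'I_2 -> R) : R :=
  if p ord0 <= 3/4 then (p ord0 ^+ 2)^-1 else 0.

Lemma phase2_potential_ge0 p : 0 <= phase2_potential p.
Proof. by rewrite /phase2_potential; case: ifP; rewrite ?invr_ge0 ?sqr_ge0. Qed.

Lemma phase2_potential_le p : phase2_potential p <= (p ord0 ^+ 2)^-1.
Proof. by rewrite /phase2_potential; case: ifP; rewrite ?invr_ge0 ?sqr_ge0. Qed.

Lemma phase2_potential_contract t p : (t0 <= t)%N -> simplex p ->
  \sum_i w p i * phase2_potential (step t p i) <= (1 - eta / 4) * phase2_potential p.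
Proof.
move=> t_ge p_simplex; have [p_ge0 sum_p] := p_simplex.
rewrite sum_ord2 {3}/phase2_potential.
case: (lerP (p ord0) (3/4)) => [p0_le | p0_gt]; last first.
  have V_step i : phase2_potential (step t p i) = 0.
    by rewrite /phase2_potential leNgt (lt_le_trans p0_gt (phase2_step_ge i t_ge p_simplex)).
  by rewrite !V_step !mulr0 addr0.
have [w0_gt0 w1_gt0] := (tilde_pi_gt0 admissible (p_ge0 ord0),
                         tilde_pi_gt0 admissible (p_ge0 ord_max)).
apply: le_trans (lerD (ler_wpM2l (ltW w0_gt0) (phase2_potential_le _))
                      (ler_wpM2l (ltW w1_gt0) (phase2_potential_le _))) _.
rewrite phase2_step_ord0 // phase2_step_ord_max //.
move: sum_p (sum_tilde_pi admissible p_simplex); rewrite !sum_ord2.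
set b := p ord_max; set w1 := w p ord_max; set z := eta * b => sum_p sum_w.
have w1_ge : gamma / 2 <= w1 := tilde_pi_ge admissible (p_ge0 ord_max).
have eta_ge0 : 0 <= eta by case: admissible.
have /andP[b_ge b_le1] : 1/4 <= b <= 1 by have := p_ge0 ord0; lra.
have [z_ge0 z_ge] : 0 <= z /\ eta / 4 <= z by rewrite /z; split; nra.
have z_le : 2 * z <= w1.
  have := eta_le_gamma4; have : z <= eta by rewrite /z; nra.
  lra.
have wz_gt0 : 0 < w1 + z by have : 0 < w1 := w1_gt0; lra.
have key : w1 ^+ 3 / (w1 + z) ^+ 2 <= w1 - eta / 4.
  by rewrite ler_pdivrMr ?exprn_gt0 ?cube_le_mul_sqr.
(* Working with [q = (p ord0)^-1] avoids a special case for [p ord0 = 0]. *)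
rewrite -!exprVn invf_div invfM; set q := (p ord0)^-1.
have -> : w p ord0 * q ^+ 2 + w1 * (w1 * (q * (w1 + z)^-1)) ^+ 2
          = q ^+ 2 * (w p ord0 + w1 ^+ 3 / (w1 + z) ^+ 2).
  by field; rewrite gt_eqF.
by rewrite [X in _ <= X]mulrC; apply: ler_wpM2l; rewrite ?sqr_ge0 //; lra.
Qed.

Lemma phase2_tail n t p : (t0 <= t)%N -> simplex p -> 1/4 <= p ord0 ->
  wsu_expect eta gamma ell n t p (fun s => (run t p s ord0 <= 3/4)%R%:R)
  <= 9 * expR (- (eta / 4) * n%:R).
Proof.
move=> t_ge p_simplex p0_ge.
have indicator_le s :
    ((run t p s ord0 <= 3/4)%R%:R : R) <= 9/16 * phase2_potential (run t p s).
  have r_gt0 : 0 < run t p s ord0 by apply: pi_run_gt0 => //; lra.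
  rewrite /phase2_potential; case: ifP => [r_le|_]; last by rewrite mulr0.
  by rewrite ler_pdivlMr ?exprn_gt0 // mul1r; nra.
have eta_le4 : eta / 4 <= 1.
  by have := eta_le_gamma4; case: admissible => _ _ /andP[_ gamma_le1]; lra.
have rate_le : (1 - eta / 4) ^+ n <= expR (- (eta / 4)) ^+ n.
  by apply: lerXn2r; rewrite ?nnegrE ?subr_ge0 ?expR_ge0 ?expR_ge1Dx.
have V_le : phase2_potential p <= 16.
  apply: le_trans (phase2_potential_le p) _.
  by rewrite invf_ple ?posrE ?exprn_gt0; nra.
apply: (@le_trans _ _
  (9/16 * wsu_expect eta gamma ell n t p (fun s => phase2_potential (run t p s)))).
  by rewrite -wsu_expectZ; apply: ler_wsu_expect.
have rho_ge0 : 0 <= 1 - eta / 4 by lra.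
have c_ge0 : 0 <= 9/16 :> R by lra.
apply: le_trans (ler_wpM2l c_ge0 (wsu_expect_supermartingale admissible rho_ge0
  phase2_potential_contract n t_ge p_simplex)) _.
have := ler_pM (exprn_ge0 n rho_ge0) (phase2_potential_ge0 p) rate_le V_le.
rewrite expRM_natr; lra.
Qed.

Lemma phase2_tail_cat n t p (u : seq 'I_2) : (t0 <= t + size u)%N -> simplex p ->
  1/4 <= run t p u ord0 ->
  wsu_expect eta gamma ell n (t + size u) (run t p u)
    (fun v => (run t p (u ++ v) ord0 <= 3/4)%R%:R)
  <= 9 * expR (- (eta / 4) * n%:R).
Proof.
move=> t_ge p_simplex u_ge.
rewrite (eq_wsu_expect _ _ _ (G := fun v =>
  (run (t + size u) (run t p u) v ord0 <= 3/4)%R%:R)) => [|v]; last first.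
  by rewrite pi_run_cat.
exact/phase2_tail/u_ge/simplex_run.
Qed.

End PhaseTwo.

Lemma valid_pair_admissible (R : realType) K (eta gamma : R) (ell : nat -> 'I_K -> R) :
  (0 < K)%N -> valid_pair K eta gamma -> (forall t i, 0 <= ell t i <= 1) ->
  wsu_admissible eta gamma ell.
Proof.
move=> K_gt0 [eta_gt0 _ gamma_gt0 gamma_lt eta_gamma] ell_bounded.
by split=> //; [exact: ltW | rewrite gamma_gt0; lra].
Qed.

Lemma two_phase_loss_bounded (R : realType) T t i : 0 <= two_phase_loss R T t i <= 1.
Proof. by rewrite /two_phase_loss; case: ifP => _; case: eqP; rewrite /= ?lexx ?ler01. Qed.

Lemma two_phase_loss_phase2 (R : realType) T t : (T1 T < t)%N ->
  two_phase_loss R T t ord0 = 0 /\ two_phase_loss R T t ord_max = 1.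
Proof. by rewrite /two_phase_loss ltnNge => /negbTE ->. Qed.

Lemma two_phase_horizons T : (100 %| T)%N ->
  T = (100 * T1 T)%N /\ T2 T = (20 * T1 T)%N.
Proof.
case/dvdnP=> k ->; rewrite /T1 /T2 mulnK // (_ : 2 * (k * 100) = k * 20 * 10)%N.
  by rewrite mulnK //; lia.
by lia.
Qed.

Theorem mainTheorem19 (R : realType) (eta gamma : nat -> R) :
  (forall T : nat, (0 < T)%N -> (100 %| T)%N ->
     valid_pair 2 (eta T) (gamma T) /\ nontrivial_regime T (eta T) (gamma T)) ->
  exists T0 : nat, forall T : nat, (T0 <= T)%N -> (0 < T)%N -> (100 %| T)%N ->
    let P := wsu_prob (eta T) (gamma T) (two_phase_loss R T) (T := T) in
    let E2 := fun s : T.-tuple 'I_2 =>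
      1/4 <= pi_at (eta T) (gamma T) (two_phase_loss R T) s (T1 T + T2 T) ord0 in
    let A := fun s : T.-tuple 'I_2 =>
      pi_at (eta T) (gamma T) (two_phase_loss R T) s T ord0 <= 3/4 in
    0 < P E2 ->
    P (fun s => A s && E2 s) / P E2
      <= 75/4 * expR (- (79/400) * eta T * T%:R).
Proof.
move=> params; exists 0%N => T _ T_gt0 T_dvd P E2 A PE2_gt0.
have [valid _] := params T T_gt0 T_dvd.
have adm := valid_pair_admissible (ell := two_phase_loss R T) isT valid
  (@two_phase_loss_bounded R T).
have [T_eq T2_eq] := two_phase_horizons T_dvd.
set m := (T1 T + T2 T)%N; set n := (79 * T1 T)%N.
set run := pi_run (eta T) (gamma T) (two_phase_loss R T) 1 (@pi_init R 2).
set C := 75/4 * expR _.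
have tail (u : m.-tuple 'I_2) : 1/4 <= run u ord0 ->
  wsu_expect (eta T) (gamma T) (two_phase_loss R T) n (1 + m) (run u)
    (fun v => (run (u ++ v) ord0 <= 3/4)%R%:R) <= C.
  move=> u_ge.
  have := phase2_tail_cat adm (@two_phase_loss_phase2 R T) n (u := u)
    _ (simplex_pi_init adm) u_ge.
  rewrite size_tuple => /(_ _)/le_trans -> //; first by rewrite /m; lia.
  have T_R : T%:R = 100 * (T1 T)%:R :> R by rewrite {1}T_eq natrM.
  rewrite /C (_ : - (79/400) * eta T * T%:R = - (eta T / 4) * n%:R).
    by apply: ler_wpM2r; rewrite ?expR_ge0 //; lra.
  by rewrite T_R /n natrM; field.
have cond := wsu_expect_condition_le adm (A := fun s => (run s ord0 <= 3/4)%R)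
  (B := fun u => 1/4 <= run u ord0) (simplex_pi_init adm) tail.
rewrite (_ : (m + n)%N = T) in cond; last by rewrite /m /n; lia.
rewrite ler_pdivrMr // /P.
rewrite (wsu_probE _ _ _ (A := E2) (f := fun s => 1/4 <= run (take m s) ord0)) //.
rewrite (wsu_probE _ _ _ (A := fun s => A s && E2 s)
  (f := fun s => (run s ord0 <= 3/4) && (1/4 <= run (take m s) ord0))) //.
by move=> s; rewrite /A /pi_at take_oversize ?size_tuple.
Qed.
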